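(* There exist two languages $L_1,L_2\subseteq\mathbb{N}$ and an enumeration $x_{1:\infty}$ that is, for each $K\in\{L_1,L_2\}$, an enumeration of $K$ with $o(1)$-noise and without omissions, such that for every $\rho>0$ no element-based generator can, with target $K$ an arbitrary member of the collection $\{L_1,L_2\}$, generate from $K$ in the limit on $x_{1:\infty}$ and achieve element-based upper density at least $\rho$ in $K$.
   Context: The universe is $U=\mathbb{N}$ with its natural order; a language is an infinite subset of $U$. For $A,B\subseteq\mathbb{N}$ with $B=\{b_1<b_2<\cdots\}$, $\mu_{\rm up}(A,B)=\limsup_n\frac1n|A\cap\{b_1,\dots,b_n\}|$. An enumeration of $L$ with $o(1)$-noise and without omissions is a sequence of distinct elements in which every element of $L$ appears and $\frac1n|\{t\le n:x_t\notin L\}|\to0$. An element-based generator outputs at step $n$, from $x_1,\dots,x_n$ (and knowledge of the collection, not of $K$), an element $w_n\notin\{x_1,\dots,x_n,w_1,\dots,w_{n-1}\}$; it generates in the limit from $K$ if $w_n\in K$ for all sufficiently large $n$, and achieves element-based upper density $\rho$ if $\mu_{\rm up}(\{w_1,w_2,\dots\},K)\ge\rho$. *)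

From HB Require Import structures.
From mathcomp Require Import all_boot all_order all_algebra.
From mathcomp Require Import all_classical all_reals all_analysis.
Set Implicit Arguments. Unset Strict Implicit. Unset Printing Implicit Defensive.
Import Order.TTheory GRing.Theory Num.Theory.
Import numFieldNormedType.Exports.
Local Open Scope classical_set_scope.
Local Open Scope ring_scope.

Definition language (L : set nat) : Prop := infinite_set L.

(* Least element of B that is >= m (default 0 if none). *)
Definition next_ge (B : set nat) (m : nat) : nat :=
  xget 0%N [set k | B k /\ (m <= k)%N /\ forall j, B j -> (m <= j)%N -> (k <= j)%N].

(* The increasing enumeration b_0 < b_1 < ... of B (0-indexed: b_{i+1} of
   the paper is [incr_enum B i]). *)
Fixpoint incr_enum (B : set nat) (i : nat) : nat :=
  match i with
  | 0 => next_ge B 0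
  | i'.+1 => next_ge B (incr_enum B i').+1
  end.

Definition count_first (A B : set nat) (n : nat) : nat :=
  count (fun i => `[< A (incr_enum B i) >]) (iota 0 n).

Definition mu_up (R : realType) (A B : set nat) : \bar R :=
  limn_esup (fun n => ((count_first A B n.+1)%:R / (n.+1)%:R : R)%:E).

(* x (0-indexed: x t is x_{t+1} of the paper) is an enumeration of L with
   o(1)-noise and without omissions. *)
Definition enum_noise_no_omission (R : realType) (L : set nat) (x : nat -> nat)
  : Prop :=
  injective x /\
  (forall k, L k -> exists t, x t = k) /\
  (fun n => ((count (fun t => `[< ~ L (x t) >]) (iota 0 n.+1))%:R
               / (n.+1)%:R : R)) @ \oo --> (0 : R).

(* An element-based generator: a map from the prefix [x_1,...,x_n] (n >= 1)
   to the output w_n, which must avoid the prefix and all earlier outputs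
   w_k = G [x_1,...,x_k], k < n. *)
Definition element_generator (G : seq nat -> nat) : Prop :=
  forall s : seq nat, (0 < size s)%N ->
    G s \notin s /\ (forall k, (0 < k < size s)%N -> G s != G (take k s)).

(* Output sequence of G on x: w n = G [x_0,...,x_n] (paper's w_{n+1}). *)
Definition gen_output (G : seq nat -> nat) (x : nat -> nat) (n : nat) : nat :=
  G (mkseq x n.+1).

Definition generates_in_limit (G : seq nat -> nat) (x : nat -> nat)
  (K : set nat) : Prop :=
  exists N, forall n, (N <= n)%N -> K (gen_output G x n).

Definition achieves_upper_density (R : realType) (G : seq nat -> nat)
  (x : nat -> nat) (K : set nat) (rho : R) : Prop :=
  (rho%:E <= mu_up R (range (gen_output G x)) K)%E.

From mathcomp Require Import all_boot all_order all_algebra.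
From mathcomp Require Import all_classical all_reals all_analysis.
From mathcomp Require Import zify lra.
From mathcomp Require finmap.
Import Order.TTheory GRing.Theory Num.Theory.
Import numFieldNormedType.Exports.
Local Open Scope classical_set_scope.

(* Take L1 = N and L2 = the squares, and let x swap the k-th square with the
   k-th non-square.  Then x is a bijection of N whose non-square values sit at
   square positions, so x has O(sqrt n) noise for both languages.  A generator
   that eventually outputs only squares has output of density zero in N, which
   rules out positive upper density for K = N; no property of the generator
   beyond its output sequence is needed. *)

Set Implicit Arguments. Unset Strict Implicit.

Lemma unbounded_infinite (A : set nat) :
  (forall m, exists k, (m <= k)%N /\ A k) -> infinite_set A.
Proof.
move=> A_unb /finite_fsetP[X eA].
have [k [lt_max_k Ak]] := A_unb (\max_(i <- finmap.enum_fset X) i).+1.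
have kX : k \in finmap.enum_fset X by rewrite eA in Ak.
by move: lt_max_k; rewrite ltnNge (@leq_bigmax_seq _ _ xpredT id _ kX).
Qed.

Section IncreasingEnumeration.

Variable B : set nat.
Hypothesis B_unb : forall m, exists k, (m <= k)%N /\ B k.

Lemma next_geP m : B (next_ge B m) /\ (m <= next_ge B m)%N /\
  forall j, B j -> (m <= j)%N -> (next_ge B m <= j)%N.
Proof.
have exB : exists k, `[< B k >] && (m <= k)%N.
  by have [k [mk Bk]] := B_unb m; exists k; rewrite mk andbT; apply/asboolP.
have [k /andP[/asboolP Bk mk] k_min] := ex_minnP exB.
rewrite /next_ge; apply: (@xgetPex _ 0%N [set k | B k /\ (m <= k)%N /\
  forall j, B j -> (m <= j)%N -> (k <= j)%N]).
exists k; split=> //; split=> // j Bj mj.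
by apply: k_min; rewrite mj andbT; apply/asboolP.
Qed.

Lemma incr_enum_mem i : B (incr_enum B i).
Proof.
by case: i => [|i]; [case: (next_geP 0) | case: (next_geP (incr_enum B i).+1)].
Qed.

Lemma incr_enum_ltS i : (incr_enum B i < incr_enum B i.+1)%N.
Proof. by case: (next_geP (incr_enum B i).+1) => _ []. Qed.

Lemma incr_enum_lt i j : (i < j)%N -> (incr_enum B i < incr_enum B j)%N.
Proof.
elim: j => // j IHj; rewrite ltnS leq_eqVlt => /predU1P[->|/IHj lt_ij].
  exact: incr_enum_ltS.
exact: ltn_trans lt_ij (incr_enum_ltS j).
Qed.

Lemma incr_enum_inj : injective (incr_enum B).
Proof.
by move=> i j eq_ij; case: (ltngtP i j) => // /incr_enum_lt; rewrite eq_ij ltnn.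
Qed.

Lemma leq_incr_enum i : (i <= incr_enum B i)%N.
Proof. by elim: i => // i IHi; exact: leq_ltn_trans IHi (incr_enum_ltS i). Qed.

Lemma incr_enum_onto t : B t -> exists k, incr_enum B k = t.
Proof.
move=> Bt.
have reach i : (exists k, incr_enum B k = t) \/ (incr_enum B i <= t)%N.
  elim: i => [|i [found|le_it]]; [right|by left|].
    by case: (next_geP 0) => _ [_]; apply.
  case: (ltngtP (incr_enum B i) t) => [lt_it|lt_ti|<-].
  - by right; case: (next_geP (incr_enum B i).+1) => _ [_]; apply.
  - by move: le_it; rewrite leqNgt lt_ti.
  - by left; exists i.
have [//|le_t] := reach t.+1.
by have := leq_incr_enum t.+1; rewrite leqNgt ltnS le_t.
Qed.

Definition incr_index (t : nat) : nat := xget 0%N [set k | incr_enum B k = t].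

Lemma incr_indexK t : B t -> incr_enum B (incr_index t) = t.
Proof. by move=> /incr_enum_onto ex_t; apply: (xgetPex 0%N ex_t). Qed.

Lemma incr_enumK : cancel (incr_enum B) incr_index.
Proof.
by move=> k; apply: incr_enum_inj; rewrite incr_indexK //; exact: incr_enum_mem.
Qed.

End IncreasingEnumeration.

Lemma incr_enumT i : incr_enum setT i = i.
Proof.
have T_unb m : exists k, (m <= k)%N /\ [set: nat] k by exists m.
have next_geT m : next_ge setT m = m.
  have [_ [le_m m_min]] := next_geP T_unb m.
  by apply/eqP; rewrite eqn_leq le_m m_min.
by elim: i => [|i IHi] /=; rewrite next_geT ?IHi.
Qed.

Section RankSwap.

Variable A : set nat.
Hypothesis A_unb : forall m, exists k, (m <= k)%N /\ A k.
Hypothesis AC_unb : forall m, exists k, (m <= k)%N /\ (~` A) k.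

Definition rank_swap (t : nat) : nat :=
  if `[< A t >] then incr_enum (~` A) (incr_index A t)
  else incr_enum A (incr_index (~` A) t).

Lemma rank_swap_mem t : A (rank_swap t) <-> ~ A t.
Proof.
rewrite /rank_swap; case: asboolP => At.
- by split=> [A_swap|/(_ At)//]; exfalso; exact: incr_enum_mem AC_unb _ A_swap.
- by split=> // _; exact: incr_enum_mem.
Qed.

Lemma rank_swapK : involutive rank_swap.
Proof.
move=> t; rewrite {2}/rank_swap; case: asboolP => [At|nAt]; rewrite /rank_swap.
- case: asboolP => [A_swap|_]; first by have := incr_enum_mem AC_unb _ A_swap.
  by rewrite (incr_enumK AC_unb) (incr_indexK A_unb At).
- case: asboolP => [_|nA_swap]; last by have := nA_swap (incr_enum_mem A_unb _).
  by rewrite (incr_enumK A_unb) (incr_indexK AC_unb nAt).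
Qed.

End RankSwap.

Definition squares : set nat := [set t | exists k, t = (k * k)%N].

Lemma squares_unb m : exists k, (m <= k)%N /\ squares k.
Proof. by exists (m * m)%N; split; [nia | exists m]. Qed.

Lemma non_squares_unb m : exists k, (m <= k)%N /\ (~` squares) k.
Proof.
exists (m.+1 * m.+1 + 1)%N; split; first nia.
by case=> j; case: (leqP j m.+1); nia.
Qed.

Lemma exists_isqrt n : exists m, (m * m <= n < m.+1 * m.+1)%N.
Proof.
elim: n => [|n [m /andP[le_mn lt_nm]]]; first by exists 0%N.
case: (ltnP n.+1 (m.+1 * m.+1)) => [lt_n1|le_n1].
  by exists m; rewrite lt_n1 andbT; exact: leqW.
by exists m.+1; rewrite le_n1 /=; nia.
Qed.

Lemma squares_below n m i : (n < m * m)%N -> (i <= n)%N -> squares i ->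
  i \in [seq k * k | k <- iota 0 m]%N.
Proof.
move=> lt_n_mm le_kk_n [k eq_ik]; subst i; apply: map_f; rewrite mem_iota add0n.
case: (ltnP k m) => // le_mk.
by have := leq_trans (leq_mul le_mk le_mk) le_kk_n; rewrite leqNgt lt_n_mm.
Qed.

Lemma count_iota_le_size (P : pred nat) n s :
  (forall i, (i < n)%N -> P i -> i \in s) -> (count P (iota 0 n) <= size s)%N.
Proof.
move=> Ps; rewrite -size_filter; apply: uniq_leq_size.
  exact/filter_uniq/iota_uniq.
by move=> i; rewrite mem_filter mem_iota add0n => /andP[Pi lt_in]; apply: Ps.
Qed.

(* Up to n the count is at most sqrt n + 1 + size s. *)
Lemma count_squares_sublinear (P : pred nat) (s : seq nat) :
  (forall i, P i -> squares i \/ i \in s) ->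
  forall M, exists N, forall n, (N <= n)%N ->
    (count P (iota 0 n.+1) * M <= n)%N.
Proof.
move=> Psq M; pose a := size s.
have count_le n m : (n < m * m)%N -> (count P (iota 0 n.+1) <= m + a)%N.
  move=> lt_n_mm; have -> : (m + a = size ([seq k * k | k <- iota 0 m] ++ s))%N.
    by rewrite size_cat size_map size_iota.
  apply: count_iota_le_size => i lt_in /Psq[sq_i|s_i]; rewrite mem_cat.
    by rewrite (squares_below lt_n_mm lt_in sq_i).
  by rewrite s_i orbT.
exists (((2 + a) * M + 1 + a) * M)%N => n le_Nn.
have [m /andP[le_mm_n lt_n_m1]] := exists_isqrt n.
apply: leq_trans (leq_mul (count_le _ _ lt_n_m1) (leqnn M)) _.
case: (leqP ((2 + a) * M) m) => le_m; last by nia.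
by have := leq_mul (leqnn m) le_m; nia.
Qed.

Local Open Scope ring_scope.

Section Density.

Variable R : realType.

Lemma sublinear_cvg0 (c : nat -> nat) :
  (forall M, exists N, forall n, (N <= n)%N -> (c n * M <= n)%N) ->
  (fun n => (c n)%:R / n.+1%:R : R) @ \oo --> (0 : R).
Proof.
move=> c_sub; apply/cvgrPdist_lt => e e_gt0.
pose M := (Num.truncn e^-1).+1.
have eM_gt1 : 1 < e * M%:R.
  by rewrite -ltr_pdivrMl // mulr1 truncnS_gt.
have [N cM_le] := c_sub M; exists N => // n /cM_le /= cM_le_n.
have cM_lt : (c n)%:R * M%:R < n.+1%:R :> R by rewrite -natrM ltr_nat ltnS.
rewrite sub0r normrN ger0_norm ?divr_ge0 // ltr_pdivrMr ?ltr0Sn //.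
have c_ge0 : 0 <= (c n)%:R :> R by [].
nra.
Qed.

Lemma count_squares_cvg0 (P : pred nat) (s : seq nat) :
  (forall i, P i -> squares i \/ i \in s) ->
  (fun n => (count P (iota 0 n.+1))%:R / n.+1%:R : R) @ \oo --> (0 : R).
Proof. by move=> Psq; exact: sublinear_cvg0 (count_squares_sublinear Psq). Qed.

Lemma mu_up_cvg (A B : set nat) (l : R) :
  (fun n => (count_first A B n.+1)%:R / n.+1%:R : R) @ \oo --> l ->
  mu_up R A B = l%:E.
Proof.
move=> cvg_l.
have cvgE_l : (fun n => ((count_first A B n.+1)%:R / n.+1%:R : R)%:E)
    @ \oo --> l%:E by apply: cvg_EFin; [by apply: nearW | exact: cvg_l].
rewrite /mu_up is_cvg_limn_esupE; last by apply/cvg_ex; exists l%:E.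
exact: cvg_lim cvgE_l.
Qed.

Lemma count_firstT (A : set nat) n :
  count_first A setT n = count (fun i => `[< A i >]) (iota 0 n).
Proof. by apply: eq_count => i; rewrite incr_enumT. Qed.

Lemma mu_up_eventually_squares (w : nat -> nat) N :
  (forall n, (N <= n)%N -> squares (w n)) -> mu_up R (range w) setT = 0%:E.
Proof.
move=> w_sq; apply: mu_up_cvg; under eq_fun do rewrite count_firstT.
apply: (count_squares_cvg0 (s := [seq w j | j <- iota 0 N])).
move=> i /asboolP[j _ <-].
case: (ltnP j N) => [lt_jN|le_Nj]; last by left; exact: w_sq.
by right; apply: map_f; rewrite mem_iota.
Qed.

Lemma enum_rank_swap_squares (K : set nat) :
  squares `<=` K -> enum_noise_no_omission R K (rank_swap squares).
Proof.
have swapK := rank_swapK squares_unb non_squares_unb.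
move=> sq_K; split; [exact: inv_inj | split=> [k _|]].
  by exists (rank_swap squares k).
apply: (count_squares_cvg0 (s := [::])) => t /asboolP nK_swap; left.
apply: contrapT => nsq_t; apply/nK_swap/sq_K.
exact: (rank_swap_mem squares_unb non_squares_unb t).2.
Qed.

End Density.

Theorem theorem6p20 (R : realType) :
  exists L1 L2 : set nat,
    language L1 /\ language L2 /\ L1 <> L2 /\
    exists x : nat -> nat,
      enum_noise_no_omission R L1 x /\ enum_noise_no_omission R L2 x /\
      forall rho : R, 0 < rho ->
        forall G : seq nat -> nat, element_generator G ->
          ~ (forall K : set nat, K = L1 \/ K = L2 ->
               generates_in_limit G x K /\ achieves_upper_density G x K rho).
Proof.
exists setT, squares; split; first exact: infinite_nat.
split; first exact: unbounded_infinite squares_unb.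
split.
  have [k [_ nsq_k]] := non_squares_unb 0.
  by move=> T_sq; apply: nsq_k; rewrite -T_sq.
exists (rank_swap squares).
split; first exact: enum_rank_swap_squares.
split; first exact: enum_rank_swap_squares.
move=> rho rho_gt0 G _ G_gen.
have [_ dense] := G_gen setT (or_introl erefl).
have [[N eventually_sq] _] := G_gen squares (or_intror erefl).
move: dense; rewrite /achieves_upper_density.
by rewrite (mu_up_eventually_squares R eventually_sq) lee_fin leNgt rho_gt0.
Qed.
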